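(* Fix a constant $c\in[0,1)$. Consider the family of instances indexed by $N\ge 2$ and a marked element $i^*\in[N]$: $A=E=\mathbb{C}^N$, $B=E'=\mathbb{C}^2$, $\sigma_A=I/N$, $f(i)=1$ iff $i=i^*$ (else $0$), and $U^{\mathcal{N}}_{E'A\to EB}|b\rangle_{E'}|i\rangle_A=|i\rangle_E|b\oplus f(i)\rangle_B$, so that $V^{\mathcal{N}}=U^{\mathcal{N}}|0\rangle_{E'}$ is an isometric extension of the channel $\mathcal{N}(\rho)=\sum_i\langle i|\rho|i\rangle|f(i)\rangle\langle f(i)|$; here $d_E=N$ and $\mathcal{N}(\sigma_A)$ has smallest eigenvalue $1/N$, so $\kappa_{\mathcal{N}(\sigma)}=N$. Any quantum algorithm that, given black-box access to $U^{\mathcal{N}}$ (and its inverse) for an unknown $i^*$, implements a channel $\tilde{\mathcal{P}}_{B\to A}$ with $\|\tilde{\mathcal{P}}-\mathcal{P}^{\sigma,\mathcal{N}}_{B\to A}\|_\diamond\le c$ for every such instance must use $U^{\mathcal{N}}$ at least $\Omega(\sqrt N)$ times in the worst case. Equivalently, for every $\alpha\in[0,\tfrac12]$ the number of uses is $\Omega\big(d_E^{1/2-\alpha}\kappa_{\mathcal{N}(\sigma)}^{\alpha}\big)$.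
   Context: The Petz recovery channel of $\sigma_A$ and $\mathcal{N}_{A\to B}$ is $\mathcal{P}^{\sigma,\mathcal{N}}_{B\to A}(\omega_B):=\sigma_A^{1/2}\,\mathcal{N}^\dagger\!\big(\mathcal{N}(\sigma_A)^{-1/2}\,\omega_B\,\mathcal{N}(\sigma_A)^{-1/2}\big)\,\sigma_A^{1/2}$, where $\mathcal{N}^\dagger$ is the Hilbert–Schmidt adjoint of $\mathcal{N}$. $\|\cdot\|_\diamond$ is the diamond norm. Each use of $U^{\mathcal{N}}$ or its inverse corresponds to one query to the standard search oracle $|i\rangle|b\rangle\mapsto|i\rangle|b\oplus f(i)\rangle$. *)

From mathcomp Require Import all_boot all_algebra.
From mathcomp Require Import reals.
From mathcomp.real_closed Require Import complex.
From Stdlib Require Import ClassicalEpsilon.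
Import GRing.Theory Num.Theory.

Set Implicit Arguments.
Unset Strict Implicit.
Unset Printing Implicit Defensive.

Local Open Scope ring_scope.

Section LinAlg.
Variable R : realType.
Local Notation C := (R[i]).

(* Linear operators from C^J to C^I, as I x J matrices indexed by finite types
   (rows I = output system, columns J = input system). *)
Definition op (I J : finType) := I -> J -> C.

Definition mulop (I J K : finType) (A : op I J) (B : op J K) : op I K :=
  fun i k => \sum_j A i j * B j k.
Definition adjop (I J : finType) (A : op I J) : op J I :=
  fun j i => (A i j)^*.
Definition idop (I : finType) : op I I := fun i j => (i == j)%:R.
Definition trop (I : finType) (A : op I I) : C := \sum_i A i i.
Definition tensop (I J K L : finType) (A : op I J) (B : op K L) : op (I * K)%type (J * L)%type :=
  fun p q => A p.1 q.1 * B p.2 q.2.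
Definition ptr1 (K I : finType) (X : op (K * I)%type (K * I)%type) : op I I :=
  fun i i' => \sum_k X (k, i) (k, i').
Definition ptr2 (I K : finType) (X : op (I * K)%type (I * K)%type) : op I I :=
  fun i i' => \sum_k X (i, k) (i', k).

Definition isometry (I J : finType) (V : op I J) := mulop (adjop V) V = @idop J.
Definition unitary (I : finType) (U : op I I) :=
  mulop (adjop U) U = @idop I /\ mulop U (adjop U) = @idop I.

Definition psd (I : finType) (X : op I I) :=
  (forall i j, X i j = (X j i)^*) /\
  (forall v : I -> C, 0 <= \sum_i \sum_j (v i)^* * X i j * v j).

Definition op0 (I J : finType) : op I J := fun _ _ => 0.

Definition msqrt (I : finType) (X : op I I) : op I I :=
  epsilon (inhabits (@op0 I I)) (fun S => psd S /\ mulop S S = X).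
Definition minv (I : finType) (X : op I I) : op I I :=
  epsilon (inhabits (@op0 I I))
          (fun Y => mulop X Y = @idop I /\ mulop Y X = @idop I).

Definition tracenorm (I J : finType) (X : op I J) : C :=
  trop (msqrt (mulop (adjop X) X)).

Definition supop (I J : finType) := op I I -> op J J.

Definition tensid (I J : finType) (Phi : supop I J) (K : finType) :
  supop (I * K)%type (J * K)%type :=
  fun X p q => Phi (fun i i' => X (i, p.2) (i', q.2)) p.1 q.1.

(* ||Phi||_diamond <= c, with ||Phi||_diamond =
   sup_K sup_{||X||_1 <= 1} ||(Phi (x) id_K)(X)||_1. *)
Definition diamond_le (I J : finType) (Phi : supop I J) (c : R) :=
  forall (K : finType) (X : op (I * K)%type (I * K)%type),
    tracenorm X <= 1 -> tracenorm (@tensid I J Phi K X) <= (c%:C)%C.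

(* Petz recovery channel of sigma_A and N_{A->B}; Nadj = Hilbert-Schmidt adjoint. *)
Definition petz (A B : finType) (sigma : op A A) (Nch : supop A B) (Nadj : supop B A)
  : supop B A :=
  fun omega =>
    let s := msqrt sigma in
    let n := minv (msqrt (Nch sigma)) in
    mulop s (mulop (Nadj (mulop n (mulop omega n))) s).

Variable N : nat.

(* f(i) = 1 iff i = i* ; bool encodes C^2 with false = |0>, true = |1>. *)
Definition fsearch (istar : 'I_N) (i : 'I_N) : bool := i == istar.

(* U^N_{E'A -> EB} |b>_{E'} |i>_A = |i>_E |b xor f(i)>_B,
   E' = B = bool, A = E = 'I_N. *)
Definition Uorc (istar : 'I_N) : op ('I_N * bool)%type (bool * 'I_N)%type :=
  fun p q => ((p.1 == q.2) && (p.2 == addb q.1 (fsearch istar q.2)))%:R.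

Definition Viso (istar : 'I_N) : op ('I_N * bool)%type 'I_N :=
  fun p i => Uorc istar p (false, i).

Definition chanN (istar : 'I_N) : supop 'I_N bool :=
  fun rho => ptr1 (mulop (Viso istar) (mulop rho (adjop (Viso istar)))).
Definition chanNadj (istar : 'I_N) : supop bool 'I_N :=
  fun Y => mulop (adjop (Viso istar)) (mulop (tensop (@idop 'I_N) Y) (Viso istar)).

Definition sigmaA : op 'I_N 'I_N := fun i j => (i == j)%:R / N%:R.

Definition petzN (istar : 'I_N) : supop bool 'I_N :=
  petz sigmaA (chanN istar) (chanNadj istar).

(* Working space S = (E' * A) * W, with W an arbitrary finite workspace.
   The oracle acts on the E'A (= 2N-dimensional) register; after a forward use
   of U the register E B is re-identified with E' A by the fixed swap
   |i>_E |b>_B |-> |b>_{E'} |i>_A (a fixed, oracle-independent unitary). *)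
Definition swapop : op (bool * 'I_N)%type ('I_N * bool)%type :=
  fun p q => ((p.1 == q.2) && (p.2 == q.1))%:R.

(* inv = false : use U ; inv = true : use U^{-1} = U^dagger *)
Definition query (istar : 'I_N) (inv : bool) : op (bool * 'I_N)%type (bool * 'I_N)%type :=
  if inv then mulop (adjop (Uorc istar)) (adjop swapop)
  else mulop swapop (Uorc istar).

Unset Implicit Arguments.
Record qalg := QAlg {
  qW : finType;
  qOut : finType;        (* discarded register at the end *)
  qT : nat;              (* number of uses of U or U^{-1} *)
  qinv : nat -> bool;    (* whether the k-th use is U^{-1} *)
  qVin : op ((bool * 'I_N) * qW)%type bool;   (* input isometry from B (ancillas + unitary) *)
  qVmid : nat -> op ((bool * 'I_N) * qW)%type ((bool * 'I_N) * qW)%type; (* unitaries after each query *)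
  qVout : op ('I_N * qOut)%type ((bool * 'I_N) * qW)%type  (* final isometry onto A (x) Out *)
}.

Definition qalg_valid (Q : qalg) :=
  isometry (qVin Q) /\ (forall k, (k < qT Q)%N -> unitary (qVmid Q k)) /\
  isometry (qVout Q).

Fixpoint qstate (Q : qalg) (istar : 'I_N) (k : nat) : op ((bool * 'I_N) * qW Q)%type bool :=
  match k with
  | 0 => qVin Q
  | k'.+1 => mulop (qVmid Q k')
               (mulop (tensop (query istar (qinv Q k')) (@idop (qW Q)))
                      (qstate Q istar k'))
  end.

Definition qchannel (Q : qalg) (istar : 'I_N) : supop bool 'I_N :=
  fun rho =>
    let Wt := mulop (qVout Q) (qstate Q istar (qT Q)) in
    ptr2 (mulop Wt (mulop rho (adjop Wt))).

Definition supop_sub (I J : finType) (P1 P2 : supop I J) : supop I J :=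
  fun X i j => P1 X i j - P2 X i j.

End LinAlg.

Arguments qalg_valid {R N} Q.
Arguments qchannel {R N} Q istar _ _ _.
Arguments qstate {R N} Q istar k _ _.
Arguments qT {R N} q.
Arguments qW {R N} q.
Arguments qOut {R N} q.
Arguments qinv {R N} q _.
Arguments qVin {R N} q _ _.
Arguments qVmid {R N} q _ _ _.
Arguments qVout {R N} q _ _.
Arguments supop_sub {R I J} P1 P2 _ _ _.

(* Instance: Grover search.  The Petz map of this
   instance sends the label |1><1| to |istar><istar| (petz_marked), so an
   algorithm implementing it within diamond distance c < 1 outputs the marked
   element with probability at least 1 - c (success_ge).  The hybrid argument
   of Bennett-Bernstein-Brassard-Vazirani then bounds the total success over
   all istar by 2 + 8 T^2 for T queries (success_query_bound); hence
   N (1 - c) - 2 <= 8 T^2 and T >= sqrt(1 - c)/4 * sqrt N. *)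

From Pilot Require Import Defs.
From mathcomp Require Import all_boot all_algebra order.
From mathcomp Require Import reals.
From mathcomp.real_closed Require Import complex.
From mathcomp Require Import sesquilinear spectral.
From mathcomp Require Import ring lra.
From Stdlib Require Import ClassicalEpsilon FunctionalExtensionality.
Import Order.TTheory GRing.Theory Num.Theory.
Local Open Scope ring_scope.

Set Implicit Arguments.
Unset Strict Implicit.

Section LinearAlgebra.
Variable R : realType.
Local Notation C := (R[i]).

Lemma sum_kron_l (I : finType) (i : I) (F : I -> C) :
  \sum_j (i == j)%:R * F j = F i.
Proof.
rewrite (bigD1 i) //= eqxx mul1r big1 ?addr0 // => j /negbTE.
by rewrite eq_sym => ->; rewrite mul0r.
Qed.

Lemma sum_kron_r (I : finType) (i : I) (F : I -> C) :
  \sum_j F j * (i == j)%:R = F i.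
Proof. by rewrite -(sum_kron_l i); apply: eq_bigr => j _; rewrite mulrC. Qed.

Lemma sum_kron_l' (I : finType) (i : I) (F : I -> C) :
  \sum_j (j == i)%:R * F j = F i.
Proof. by rewrite -(sum_kron_l i); apply: eq_bigr => j _; rewrite eq_sym. Qed.

Lemma sum_kron_r' (I : finType) (i : I) (F : I -> C) :
  \sum_j F j * (j == i)%:R = F i.
Proof. by rewrite -(sum_kron_r i); apply: eq_bigr => j _; rewrite eq_sym. Qed.

Lemma sum_pair (I J : finType) (F : (I * J)%type -> C) :
  \sum_p F p = \sum_i \sum_j F (i, j).
Proof. by rewrite pair_big /=; apply: eq_bigr => [[i j]] _. Qed.

Lemma psd_herm (I : finType) (X : op R I I) i j : psd X -> X i j = (X j i)^*.
Proof. by case=> h _; apply: h. Qed.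

Lemma psd_form (I : finType) (X : op R I I) v :
  psd X -> 0 <= \sum_i \sum_j (v i)^* * X i j * v j.
Proof. by case=> _ h; apply: h. Qed.

Lemma psd_diag (I : finType) (X : op R I I) i : psd X -> 0 <= X i i.
Proof.
move=> hX; have := psd_form (fun k => (i == k)%:R) hX.
under eq_bigr => k _ do (rewrite rmorph_nat; under eq_bigr => j _ do rewrite -mulrA;
  rewrite -mulr_sumr).
by rewrite sum_kron_l sum_kron_r.
Qed.

Definition diagop (I : finType) (d : I -> C) : op R I I := fun i j => (i == j)%:R * d i.

Lemma mulop_diagl (I J : finType) (d : I -> C) (X : op R I J) i j :
  mulop (diagop d) X i j = d i * X i j.
Proof.
rewrite /mulop /diagop -(sum_kron_l i (fun k => d i * X k j)).
by apply: eq_bigr => k _; case: eqP => [<-|_] /=; rewrite ?mul0r //; ring.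
Qed.

Lemma mulop_diagr (I J : finType) (d : J -> C) (X : op R I J) i j :
  mulop X (diagop d) i j = X i j * d j.
Proof.
rewrite /mulop /diagop -(sum_kron_r' j (fun k => X i k * d j)).
by apply: eq_bigr => k _; case: eqP => [->|_] /=; rewrite ?mul0r ?mulr0 //; ring.
Qed.

Lemma psd_diagop (I : finType) (d : I -> C) : (forall i, 0 <= d i) -> psd (diagop d).
Proof.
move=> hd; split.
  move=> i j; rewrite /diagop; have [->|nij] := eqVneq i j; first by rewrite mul1r geC0_conj.
  by rewrite !mul0r rmorph0.
move=> v; apply: sumr_ge0 => i _.
rewrite (_ : \sum_j _ = d i * (v i * (v i)^*)).
  by apply: mulr_ge0 => //; apply: mul_conjC_ge0.
rewrite -(sum_kron_l i (fun j => d i * (v i * (v i)^*))); apply: eq_bigr => j _.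
by rewrite /diagop; case: eqP => [<-|_] /=; rewrite ?mulr1n ?mulr0n ?mul0r ?mulr0 //; ring.
Qed.

Lemma psd_adjmul (I J : finType) (Y : op R I J) : psd (mulop (adjop Y) Y).
Proof.
split.
  move=> i j; rewrite /mulop /adjop rmorph_sum; apply: eq_bigr => k _.
  by rewrite rmorphM /= conjCK mulrC.
move=> v; rewrite /mulop /adjop.
rewrite (_ : \sum_i _ = \sum_k (\sum_j Y k j * v j)^* * (\sum_j Y k j * v j)); last first.
  under eq_bigr => i _ do (under eq_bigr => j _ do rewrite mulr_sumr mulr_suml;
     rewrite exchange_big /=).
  rewrite exchange_big /=; apply: eq_bigr => k _.
  rewrite rmorph_sum mulr_suml; apply: eq_bigr => i _.
  rewrite mulr_sumr; apply: eq_bigr => j _.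
  by rewrite rmorphM /=; ring.
by apply: sumr_ge0 => k _; rewrite mulrC mul_conjC_ge0.
Qed.

Lemma psd_form2 (I : finType) (X : op R I I) i j a b : psd X ->
  0 <= a^* * (X i i * a + X i j * b) + b^* * (X j i * a + X j j * b).
Proof.
have sum2 (F : I -> C) u w :
    \sum_l F l * (u * (i == l)%:R + w * (j == l)%:R) = F i * u + F j * w.
  under eq_bigr => l _ do rewrite mulrDr.
  rewrite big_split /= -(sum_kron_l i (fun l => F l * u)) -(sum_kron_l j (fun l => F l * w)).
  by congr (_ + _); apply: eq_bigr => l _; ring.
move=> hX; have := psd_form (fun k => a * (i == k)%:R + b * (j == k)%:R) hX.
under eq_bigr => k _ do (under eq_bigr => l _ do rewrite -mulrA; rewrite -mulr_sumr sum2).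
rewrite (eq_bigr (fun k => (X k i * a + X k j * b) * (a^* * (i == k)%:R + b^* * (j == k)%:R))).
  by rewrite sum2 mulrC (mulrC _ b^*).
by move=> k _; rewrite rmorphD !rmorphM /= !rmorph_nat mulrC.
Qed.

(* A vanishing diagonal entry forces the corresponding off-diagonal products
   to vanish; this is the degenerate case of the 2x2 minor inequality. *)
Lemma psd_diag0_offdiag (I : finType) (X : op R I I) i j : psd X ->
  X j j = 0 -> X i j * X j i = 0.
Proof.
move=> hX y0; set x := X i i; set m := X i j * X j i.
have hx : 0 <= x := psd_diag i hX.
have eji : X j i = (X i j)^* by apply: psd_herm.
have hm : 0 <= m by rewrite /m eji mul_conjC_ge0.
have cm : m^* = m := geC0_conj hm.
have cb : (- ((x + 1) * X j i))^* = - ((x + 1) * X i j).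
  by rewrite rmorphN rmorphM /= eji conjCK geC0_conj ?addr_ge0.
have := psd_form2 i j m (- ((x + 1) * X j i)) hX; rewrite cm cb y0.
have -> : m * (X i i * m + X i j * - ((x + 1) * X j i)) +
   - ((x + 1) * X i j) * (X j i * m + 0 * - ((x + 1) * X j i)) = - (m * m * (x + 2)).
  by rewrite /m /x; ring.
have x2 : 0 < x + 2 by apply: (lt_le_trans (ltr0n _ 2)); rewrite lerDr.
rewrite oppr_ge0 pmulr_lle0 // => hmm.
have : m * m == 0 by rewrite eq_le hmm mulr_ge0.
by rewrite mulf_eq0 orbb => /eqP.
Qed.

Lemma psd_minor (I : finType) (X : op R I I) i j : psd X ->
  X i j * X j i <= X i i * X j j.
Proof.
move=> hX; have hx := psd_diag i hX; have hy := psd_diag j hX.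
have [y0|ypos] := eqVneq (X j j) 0.
  by rewrite psd_diag0_offdiag // y0 mulr0.
have ypos' : 0 < X j j by rewrite lt_def ypos hy.
have := psd_form2 i j (X j j) (- X j i) hX.
rewrite rmorphN /= (geC0_conj hy) -(psd_herm _ _ hX).
have -> : X j j * (X i i * X j j + X i j * - X j i) +
    - X i j * (X j i * X j j + X j j * - X j i) =
  X j j * (X i i * X j j - X i j * X j i) by ring.
by rewrite pmulr_rge0 // subr_ge0.
Qed.

Lemma psd_zero_row (I : finType) (S : op R I I) p :
  psd S -> mulop S S p p = 0 -> forall q, S p q = 0.
Proof.
move=> hS; rewrite /mulop => h0 q.
have h0' : \sum_r S p r * (S p r)^* = 0.
  by rewrite -[RHS]h0; apply: eq_bigr => r _; rewrite (psd_herm r p hS).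
have : S p q * (S p q)^* == 0.
  by rewrite (psumr_eq0P _ h0') // => r _; apply: mul_conjC_ge0.
by rewrite mulf_eq0 conjC_eq0 orbb => /eqP.
Qed.

Lemma psd_shift_injective (I : finType) (S : op R I I) (r : C) (v : I -> C) :
  psd S -> 0 < r -> (forall j, \sum_l (S j l + (j == l)%:R * r) * v l = 0) ->
  forall j, v j = 0.
Proof.
move=> hS r0 hv.
have split_form : \sum_j (v j)^* * (\sum_l S j l * v l) + r * \sum_j (v j)^* * v j = 0.
  rewrite mulr_sumr -big_split big1 //= => j _.
  have e : \sum_l (S j l + (j == l)%:R * r) * v l = \sum_l S j l * v l + r * v j.
    rewrite -(sum_kron_l j (fun l => r * v l)) -big_split /=.
    by apply: eq_bigr => l _; ring.
  transitivity ((v j)^* * \sum_l (S j l + (j == l)%:R * r) * v l).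
    by rewrite e; ring.
  by rewrite hv mulr0.
have form0 : 0 <= \sum_j (v j)^* * (\sum_l S j l * v l).
  have := psd_form v hS.
  by under eq_bigr => j _ do (under eq_bigr => l _ do rewrite -mulrA; rewrite -mulr_sumr).
have norm0 : 0 <= \sum_j (v j)^* * v j.
  by apply: sumr_ge0 => j _; rewrite mulrC mul_conjC_ge0.
have : r * \sum_j (v j)^* * v j = 0.
  apply/eqP; rewrite eq_le (mulr_ge0 (ltW r0) norm0) andbT.
  by rewrite -(addKr (\sum_j (v j)^* * (\sum_l S j l * v l)) (r * _)) split_form
    addr0 oppr_le0.
move/eqP; rewrite mulf_eq0 (gt_eqF r0) /= => /eqP /psumr_eq0P h j.
have : (v j)^* * v j == 0 by rewrite h // => l _; rewrite mulrC mul_conjC_ge0.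
by rewrite mulf_eq0 conjC_eq0 orbb => /eqP.
Qed.

Lemma psd_sqrt_scalar (I : finType) (S : op R I I) (r : C) :
  psd S -> mulop S S = diagop (fun _ => r * r) -> 0 < r -> S = diagop (fun _ => r).
Proof.
move=> hS hSS r0; apply: functional_extensionality => i; apply: functional_extensionality => j.
rewrite /diagop; apply/eqP; rewrite -subr_eq0; apply/eqP.
apply: (psd_shift_injective (v := fun l => S l j - (l == j)%:R * r) hS r0) => k.
have -> : \sum_l (S k l + (k == l)%:R * r) * (S l j - (l == j)%:R * r) =
    \sum_l S k l * S l j - \sum_l S k l * ((l == j)%:R * r) +
    \sum_l (k == l)%:R * (r * S l j) - \sum_l (k == l)%:R * ((l == j)%:R * r * r).
  by rewrite -sumrB -big_split -sumrB /=; apply: eq_bigr => l _; ring.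
have -> : \sum_l S k l * ((l == j)%:R * r) = S k j * r.
  by rewrite -(sum_kron_r' j (fun l => S k l * r)); apply: eq_bigr => l _; ring.
by rewrite !sum_kron_l -/(mulop S S k j) hSS /diagop; ring.
Qed.

End LinearAlgebra.

Section SquareRoot.
Variable R : realType.
Local Notation C := (R[i]).
Local Open Scope sesquilinear_scope.

Lemma sum_enum (I : finType) (F : I -> C) :
  \sum_(a : I) F a = \sum_(i < #|I|) F (enum_val i).
Proof.
rewrite (reindex (@enum_val I (pred_of_simpl predT))) //.
by exists enum_rank => x _; [exact: enum_valK | exact: enum_rankK].
Qed.

(* Operators on a finite type I are handled as #|I| x #|I| matrices through
   enum_val; the eigenvalues of a PSD operator, read off any unitary diagonalisation,
   are nonnegative. *)
Lemma psd_eigen_ge0 (I : finType) (X : op R I I) (P : 'M[C]_#|I|) (d : 'rV[C]_#|I|) :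
  psd X -> diag_mx d = P *m (\matrix_(i, j) X (enum_val i) (enum_val j)) *m P^t* ->
  forall k, 0 <= d 0 k.
Proof.
move=> hX eD k.
have := congr1 (fun M : 'M[C]_#|I| => M k k) eD; rewrite /= mxE eqxx mulr1n => ->.
have := psd_form (fun a => (P k (enum_rank a))^*) hX.
rewrite sum_enum; under eq_bigr => i _ do rewrite sum_enum.
move=> h; rewrite !mxE.
under eq_bigr => j _ do (rewrite mxE mulr_suml; under eq_bigr => i _ do rewrite !mxE).
rewrite exchange_big /=; apply: le_trans h _; rewrite le_eqVlt; apply/orP; left.
apply/eqP; apply: eq_bigr => i _; apply: eq_bigr => j _.
by rewrite !enum_valK conjCK.
Qed.

Lemma psd_conj_diag (I : finType) (P : 'M[C]_#|I|) (s : 'rV[C]_#|I|) :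
  (forall k, 0 <= s 0 k) ->
  psd (fun a b : I => (P^t* *m diag_mx s *m P) (enum_rank a) (enum_rank b)).
Proof.
move=> s0.
have Bij i j : (P^t* *m diag_mx s *m P) i j = \sum_k (P k i)^* * s 0 k * P k j.
  by rewrite mxE; apply: eq_bigr => k _; rewrite mul_mx_diag !mxE.
split.
  move=> a b; rewrite !Bij rmorph_sum; apply: eq_bigr => k _.
  by rewrite !rmorphM /= conjCK (geC0_conj (s0 k)); ring.
move=> v; rewrite sum_enum; under eq_bigr => i _ do (rewrite sum_enum;
  under eq_bigr => j _ do rewrite !enum_valK Bij mulr_sumr mulr_suml).
pose u k := \sum_j P k j * v (enum_val j).
rewrite (_ : \sum_i _ = \sum_k s 0 k * ((u k)^* * u k)); last first.
  rewrite /u; under eq_bigr => i _ do rewrite exchange_big /=.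
  rewrite exchange_big /=; apply: eq_bigr => k _.
  rewrite rmorph_sum mulr_suml mulr_sumr; apply: eq_bigr => i _.
  rewrite mulr_sumr mulr_sumr; apply: eq_bigr => j _.
  by rewrite rmorphM /=; ring.
by apply: sumr_ge0 => k _; rewrite mulr_ge0 // mulrC mul_conjC_ge0.
Qed.

(* Every PSD operator has a PSD square root, obtained by taking square roots
   of the eigenvalues in a spectral decomposition. *)
Lemma psd_sqrt_ex (I : finType) (X : op R I I) :
  psd X -> exists S, psd S /\ mulop S S = X.
Proof.
move=> hX; pose A : 'M[C]_#|I| := \matrix_(i, j) X (enum_val i) (enum_val j).
have hA : A \is hermsymmx.
  apply/is_hermitianmxP; rewrite expr0 scale1r; apply/matrixP => i j.
  by rewrite !mxE; apply: psd_herm.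
have /orthomx_spectralP eA := hermitian_normalmx hA.
set P := spectralmx A in eA; set d := spectral_diag A in eA.
have PU : P \is unitarymx by apply: spectral_unitarymx.
rewrite invmx_unitary // in eA.
have eD : diag_mx d = P *m A *m P^t*.
  by rewrite eA !mulmxA (unitarymxP PU) mul1mx mulmxtVK.
have dge0 := psd_eigen_ge0 hX eD.
pose s : 'rV[C]_#|I| := \row_k sqrtC (d 0 k).
pose B : 'M[C]_#|I| := P^t* *m diag_mx s *m P.
have eB : B *m B = A.
  rewrite /B !mulmxA mulmxtVK // -(mulmxA (P^t*) (diag_mx s)) mulmx_diag eA.
  by congr (_ *m diag_mx _ *m _); apply/rowP => k; rewrite !mxE -expr2 sqrtCK.
exists (fun a b => B (enum_rank a) (enum_rank b)); split.
  by apply: psd_conj_diag => k; rewrite mxE sqrtC_ge0.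
apply: functional_extensionality => a; apply: functional_extensionality => b.
rewrite /mulop sum_enum.
have := congr1 (fun M : 'M[C]_#|I| => M (enum_rank a) (enum_rank b)) eB.
rewrite /= !mxE !enum_rankK => <-.
by apply: eq_bigr => k _; rewrite enum_valK.
Qed.

Lemma msqrt_spec (I : finType) (X : op R I I) :
  psd X -> psd (msqrt X) /\ mulop (msqrt X) (msqrt X) = X.
Proof.
move=> hX; exact: (epsilon_spec (inhabits (@op0 R I I))
  (fun S => psd S /\ mulop S S = X) (psd_sqrt_ex hX)).
Qed.

Lemma minv_spec (I : finType) (X Y : op R I I) :
  mulop X Y = @idop R I /\ mulop Y X = @idop R I ->
  mulop X (minv X) = @idop R I /\ mulop (minv X) X = @idop R I.
Proof.
move=> h; exact: (epsilon_spec (inhabits (@op0 R I I))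
  (fun Z => mulop X Z = @idop R I /\ mulop Z X = @idop R I) (ex_intro _ Y h)).
Qed.

Lemma msqrt_scalar (I : finType) (r : C) : 0 < r ->
  msqrt (diagop (fun _ : I => r * r)) = diagop (fun _ => r).
Proof.
move=> r0.
have [hS eS] := msqrt_spec (psd_diagop (fun _ : I => mulr_ge0 (ltW r0) (ltW r0))).
exact: psd_sqrt_scalar hS eS r0.
Qed.

End SquareRoot.

Section TraceNorm.
Variable R : realType.
Local Notation C := (R[i]).

Lemma trop_ge0 (I : finType) (S : op R I I) : psd S -> 0 <= trop S.
Proof. by move=> h; apply: sumr_ge0 => i _; apply: psd_diag. Qed.

Lemma diag_le_trop (I : finType) (S : op R I I) p : psd S -> S p p <= trop S.
Proof.
move=> h; rewrite /trop (bigD1 p) //= lerDl.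
by apply: sumr_ge0 => i _; apply: psd_diag.
Qed.

Lemma tracenorm_ge0 (I J : finType) (Y : op R I J) : 0 <= tracenorm Y.
Proof. by have [h _] := msqrt_spec (psd_adjmul Y); apply: trop_ge0. Qed.

(* Every diagonal entry is bounded by the trace norm: |Y_pp|^2 <= ||Y||_1^2.
   Indeed |Y_pp|^2 <= (Y^dagger Y)_pp = sum_q S_pq S_qp <= S_pp tr S for the
   square root S of Y^dagger Y, by the 2x2 minor inequality. *)
Lemma tracenorm_entry (I : finType) (Y : op R I I) p :
  (Y p p)^* * Y p p <= tracenorm Y * tracenorm Y.
Proof.
have [hS eS] := msqrt_spec (psd_adjmul Y).
rewrite /tracenorm; set S := msqrt _ in hS eS *.
have gram_pp : (Y p p)^* * Y p p <= mulop (adjop Y) Y p p.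
  rewrite /mulop /adjop (bigD1 p) //= lerDl.
  by apply: sumr_ge0 => k _; rewrite mulrC mul_conjC_ge0.
apply: le_trans gram_pp _; rewrite -eS /mulop.
apply: (@le_trans _ _ (\sum_q S p p * S q q)).
  by apply: ler_sum => q _; apply: psd_minor.
rewrite -mulr_sumr; apply: ler_wpM2r; first exact: trop_ge0.
exact: diag_le_trop.
Qed.

Definition basis_proj (I : finType) (t : I) : op R I I :=
  fun p q => ((p == t) && (q == t))%:R.

(* |t><t| is a legitimate input for the diamond norm: its trace norm is 1. *)
Lemma tracenorm_basis_proj (I : finType) (t : I) : tracenorm (basis_proj t) <= 1.
Proof.
have [hS eS] := msqrt_spec (psd_adjmul (basis_proj t)).
rewrite /tracenorm; set S := msqrt _ in hS eS *.
have gram p q : mulop (adjop (basis_proj t)) (basis_proj t) p q = ((p == t) && (q == t))%:R.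
  rewrite /mulop /adjop /basis_proj (bigD1 t) //= eqxx /= big1 ?addr0.
    by rewrite rmorph_nat -natrM mulnb.
  by move=> k /negbTE ->; rewrite /= rmorph0 mul0r.
have row0 p q : p != t -> S p q = 0.
  by move=> hp; apply: (psd_zero_row hS); rewrite eS gram (negbTE hp).
have col0 p q : q != t -> S p q = 0.
  by move=> hq; rewrite (psd_herm p q hS) row0 ?rmorph0.
have Stt2 : S t t * S t t = 1.
  have := gram t t; rewrite -eS /mulop (bigD1 t) //= big1 ?addr0 ?eqxx //.
  by move=> k hk; rewrite col0 // mul0r.
have Stt : S t t = 1.
  have h0 := psd_diag t hS.
  have : (S t t - 1) * (S t t + 1) == 0.
    by rewrite mulrDr mulr1 mulrBl Stt2 mul1r addrA subrK subrr.
  rewrite mulf_eq0 subr_eq0 => /orP [/eqP //|]; rewrite addr_eq0 => /eqP e.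
  by move: h0; rewrite e oppr_ge0 => /(lt_le_trans ltr01); rewrite ltxx.
rewrite /trop (bigD1 t) //= big1 ?addr0 ?Stt //.
by move=> k hk; rewrite row0.
Qed.

End TraceNorm.

Section DiagonalFunctions.
Variable R : realType.
Local Notation C := (R[i]).

(* On the qubit C^2 the PSD square root of a positive diagonal operator is the
   entrywise square root: the off-diagonal entries of the root vanish because
   its diagonal has positive trace. *)
Lemma msqrt_diag_bool (d : bool -> C) : (forall b, 0 < d b) ->
  msqrt (diagop d) = diagop (fun b => sqrtC (d b)).
Proof.
move=> dpos.
have [hS eS] := msqrt_spec (psd_diagop (fun b => ltW (dpos b))).
set S := msqrt _ in hS eS *.
have sq b b' : S b true * S true b' + S b false * S false b' = (b == b')%:R * d b.
  by have := congr1 (fun X => X b b') eS; rewrite /mulop big_bool.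
have Stf : S true false = 0.
  have : S true false * (S true true + S false false) == 0.
    by have := sq true false; rewrite /= mulr0n mul0r => e; apply/eqP; rewrite -e; ring.
  rewrite mulf_eq0 => /orP [/eqP //|].
  rewrite paddr_eq0 ?psd_diag // => /andP [/eqP h1 /eqP h2].
  have := psd_minor true false hS; rewrite h1 h2 mulr0 (psd_herm false true hS) => h.
  have : S true false * (S true false)^* == 0 by rewrite eq_le h mul_conjC_ge0.
  by rewrite mulf_eq0 conjC_eq0 orbb => /eqP.
have Sft : S false true = 0 by rewrite (psd_herm false true hS) Stf rmorph0.
have Sbb b : S b b = sqrtC (d b).
  rewrite -(sqrCK (psd_diag b hS)) expr2; congr sqrtC.
  by have := sq b b; case: b; rewrite /= ?Stf ?Sft ?mulr0 ?mul0r ?addr0 ?add0r mul1r.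
apply: functional_extensionality => b; apply: functional_extensionality => b'.
by rewrite /diagop; case: b; case: b'; rewrite /= ?Sbb ?Stf ?Sft ?mul1r ?mul0r.
Qed.

Lemma minv_diagop (I : finType) (e : I -> C) : (forall i, e i != 0) ->
  minv (diagop e) = diagop (fun i => (e i)^-1).
Proof.
move=> ne.
have inv : mulop (diagop e) (diagop (fun i => (e i)^-1)) = @idop R I /\
           mulop (diagop (fun i => (e i)^-1)) (diagop e) = @idop R I.
  by split; apply: functional_extensionality => i; apply: functional_extensionality => j;
    rewrite mulop_diagl /diagop /idop; case: eqP => [->|_] /=;
    rewrite ?mulr1n ?mul1r ?mulr0n ?mul0r ?mulr0 ?mulfV ?mulVf.
have [_ left_inv] := minv_spec inv.
apply: functional_extensionality => i; apply: functional_extensionality => j.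
have := congr1 (fun X => X i j) left_inv; rewrite /= mulop_diagr /idop => h.
apply: (mulIf (ne j)); rewrite h /diagop.
by case: eqP => [->|_] /=; rewrite ?mulr1n ?mul1r ?mulVf ?mul0r.
Qed.

End DiagonalFunctions.

Section SearchInstance.
Variable R : realType.
Local Notation C := (R[i]).
Variable N : nat.
Variable istar : 'I_N.
Local Notation f := (fsearch istar).

Lemma Viso_E p i : Viso R istar p i = ((i, f i) == p)%:R.
Proof.
case: p => a b; rewrite /Viso /Uorc /= xpair_eqE.
by rewrite (eq_sym a) (eq_sym b).
Qed.

Lemma Viso_E2 k b p : Viso R istar (k, b) p = (k == p)%:R * (b == f k)%:R.
Proof. by rewrite /Viso /Uorc /=; have [->|nkp] := eqVneq k p; rewrite ?mul1r ?mul0r. Qed.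

Lemma chanNadj_E (Y : op R bool bool) i j :
  chanNadj istar Y i j = (i == j)%:R * Y (f i) (f i).
Proof.
rewrite /chanNadj /mulop /adjop.
under eq_bigr => p _ do rewrite Viso_E rmorph_nat.
rewrite sum_kron_l.
under eq_bigr => q _ do rewrite Viso_E.
rewrite sum_kron_r /tensop /idop /=.
by have [->|nij] := eqVneq i j; rewrite ?mul0r.
Qed.

Definition label_weight (b : bool) : C := (\sum_k (f k == b)%:R) / N%:R.

Lemma chanN_sigma : chanN istar (sigmaA R (N:=N)) = diagop label_weight.
Proof.
apply: functional_extensionality => b; apply: functional_extensionality => b'.
rewrite /chanN /ptr1 /mulop /adjop /diagop /label_weight.
rewrite mulr_suml mulr_sumr; apply: eq_bigr => k _.
under eq_bigr => p _ do rewrite Viso_E2.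
rewrite (_ : \sum_p _ = (b == f k)%:R * \sum_q sigmaA R k q * (Viso R istar (k, b') q)^*);
  last first.
  rewrite -(sum_kron_l k (fun p =>
    (b == f k)%:R * \sum_q sigmaA R p q * (Viso R istar (k, b') q)^*)).
  by apply: eq_bigr => p _; rewrite mulrA.
under eq_bigr => q _ do rewrite Viso_E2 rmorphM /= !rmorph_nat.
rewrite (_ : \sum_q _ = (N%:R)^-1 * (b' == f k)%:R); last first.
  rewrite -(sum_kron_l k (fun q => (N%:R)^-1 * (b' == f k)%:R)).
  by apply: eq_bigr => q _; rewrite /sigmaA; case: eqP => [->|_] /=; rewrite ?mul0r; ring.
by case: b; case: b'; case: (f k); rewrite /= ?mul1r ?mul0r ?mulr1 ?mulr0.
Qed.

Lemma label_weight_true : label_weight true = (N%:R)^-1.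
Proof.
rewrite /label_weight (_ : \sum_k _ = 1) ?mul1r //.
rewrite -[RHS](sum_kron_r' istar (fun _ => 1)); apply: eq_bigr => k _.
by rewrite /fsearch mul1r eqb_id.
Qed.

Hypothesis hN : (2 <= N)%N.

(* Both labels occur (as N >= 2), so N(sigma) is invertible. *)
Lemma label_weight_gt0 b : 0 < label_weight b.
Proof.
have N0 : (0 < N)%N by case: N hN.
have N1 : (1 < N)%N by [].
have [k hk] : exists k, f k = b.
  case: b; first by exists istar; rewrite /fsearch eqxx.
  exists (if istar == Ordinal N0 then Ordinal N1 else Ordinal N0); rewrite /fsearch.
  by have [->|ne] := eqVneq istar (Ordinal N0); rewrite ?eqxx //; apply/negbTE; rewrite eq_sym.
rewrite /label_weight divr_gt0 ?ltr0n // (bigD1 k) //= hk eqxx.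
by apply: (lt_le_trans ltr01); rewrite lerDl sumr_ge0 // => j _; rewrite ler0n.
Qed.

(* The Petz map sends the label |1><1| to |istar><istar|: the operator
   sigma^(1/2) N^dagger(N(sigma)^(-1/2) |1><1| N(sigma)^(-1/2)) sigma^(1/2)
   has diagonal entry (1/N) * N = 1 at the marked index. *)
Lemma petz_marked : petzN istar (basis_proj R true) istar istar = 1.
Proof.
set r : C := sqrtC (N%:R^-1).
have r0 : 0 < r by rewrite sqrtC_gt0 invr_gt0 ltr0n; case: N hN.
have rr : r * r = N%:R^-1 by rewrite -expr2 sqrtCK.
have sigma_sq : sigmaA R (N:=N) = diagop (fun _ => r * r).
  by apply: functional_extensionality => i; apply: functional_extensionality => j;
    rewrite rr.
have sqrtD : msqrt (chanN istar (sigmaA R (N:=N))) =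
    diagop (fun b => sqrtC (label_weight b)).
  by rewrite chanN_sigma msqrt_diag_bool //; exact: label_weight_gt0.
have invD : minv (msqrt (chanN istar (sigmaA R (N:=N)))) =
    diagop (fun b => (sqrtC (label_weight b))^-1).
  by rewrite sqrtD minv_diagop // => b; rewrite sqrtC_eq0 gt_eqF ?label_weight_gt0.
rewrite /petzN /petz /= invD sigma_sq msqrt_scalar // mulop_diagl mulop_diagr.
rewrite chanNadj_E eqxx mul1r /fsearch eqxx mulop_diagl mulop_diagr /basis_proj /=.
rewrite label_weight_true -/r mulr1n mul1r.
by field; rewrite gt_eqF.
Qed.

End SearchInstance.

Section Vectors.
Variable R : realType.
Local Notation C := (R[i]).

Definition sqnorm (I : finType) (x : I -> C) : C := \sum_s x s * (x s)^*.
Definition opv (I J : finType) (M : op R I J) (x : J -> C) : I -> C :=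
  fun s => \sum_t M s t * x t.
Definition vsub (I : finType) (x y : I -> C) : I -> C := fun s => x s - y s.

Lemma sqnorm_ge0 (I : finType) (x : I -> C) : 0 <= sqnorm x.
Proof. by apply: sumr_ge0 => s _; apply: mul_conjC_ge0. Qed.

Lemma sqnorm_isometry (I J : finType) (V : op R I J) (x : J -> C) :
  Defs.isometry V -> sqnorm (opv V x) = sqnorm x.
Proof.
move=> hV.
have gram t u : \sum_s V s t * (V s u)^* = (u == t)%:R.
  have := f_equal (fun X => X u t) hV; rewrite /mulop /adjop /idop /= => <-.
  by apply: eq_bigr => s _; rewrite mulrC.
rewrite /sqnorm /opv.
transitivity (\sum_t \sum_u x t * (x u)^* * \sum_s V s t * (V s u)^*).
  under eq_bigr => s _ do rewrite rmorph_sum mulr_suml.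
  rewrite exchange_big /=; apply: eq_bigr => t _.
  under eq_bigr => s _ do rewrite mulr_sumr.
  rewrite exchange_big /=; apply: eq_bigr => u _.
  rewrite mulr_sumr; apply: eq_bigr => s _; rewrite rmorphM /=; ring.
by apply: eq_bigr => t _; under eq_bigr => u _ do rewrite gram; rewrite sum_kron_r'.
Qed.

Lemma opv_sub (I J : finType) (M : op R I J) (x y : J -> C) :
  vsub (opv M x) (opv M y) = opv M (vsub x y).
Proof.
apply: functional_extensionality => s; rewrite /vsub /opv -sumrB.
by apply: eq_bigr => t _; rewrite mulrBr.
Qed.

(* Weighted triangle inequality: for t >= 0,
   t |a + b|^2 <= (t + 1) |a|^2 + t (t + 1) |b|^2,
   which follows from |a - t b|^2 >= 0. *)
Lemma sqnorm_add_le (I : finType) (a b : I -> C) (t : C) : 0 <= t ->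
  t * sqnorm (fun s => a s + b s) <= (t + 1) * sqnorm a + t * (t + 1) * sqnorm b.
Proof.
move=> t0; pose cross := \sum_s (a s * (b s)^* + b s * (a s)^*).
have e1 : sqnorm (fun s => a s + b s) = sqnorm a + sqnorm b + cross.
  rewrite /sqnorm /cross -!big_split /=; apply: eq_bigr => s _.
  by rewrite rmorphD /=; ring.
have e2 : sqnorm (fun s => a s - t * b s) = sqnorm a - t * cross + t * t * sqnorm b.
  rewrite /sqnorm /cross mulr_sumr mulr_sumr -sumrB -big_split /=.
  by apply: eq_bigr => s _; rewrite rmorphB rmorphM /= (geC0_conj t0); ring.
have := sqnorm_ge0 (fun s => a s - t * b s); rewrite e2 e1 -subr_ge0 => h.
by rewrite -subr_ge0; apply: le_trans h _; rewrite le_eqVlt; apply/orP; left;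
  apply/eqP; ring.
Qed.

Lemma sqr_sub_le (a b : C) :
  (a - b) * (a - b)^* <= 2 * (a * a^*) + 2 * (b * b^*).
Proof.
rewrite -subr_ge0 (_ : _ - _ = (a + b) * (a + b)^*); first exact: mul_conjC_ge0.
by rewrite !rmorphD /= !rmorphN /=; ring.
Qed.

Lemma sqr_sub_ge (a b : C) :
  a * a^* - 2 * (b * b^*) <= 2 * ((a - b) * (a - b)^*).
Proof.
rewrite -subr_ge0 (_ : _ - _ = (a - 2 * b) * (a - 2 * b)^*); first exact: mul_conjC_ge0.
by rewrite !rmorphD /= !rmorphN /= !rmorphM /= rmorph_nat; ring.
Qed.

End Vectors.

Section Oracle.
Variable R : realType.
Local Notation C := (R[i]).
Variable N : nat.
Variable istar : 'I_N.

(* On the query register E'A, each use of the oracle (forward, followed by the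
   fixed swap, or inverse) is the permutation flipping the bit of marked inputs. *)
Definition oracle_perm (p : bool * 'I_N) : bool * 'I_N := (addb p.1 (p.2 == istar), p.2).

Lemma oracle_perm_invol p : oracle_perm (oracle_perm p) = p.
Proof. by case: p => b j; rewrite /oracle_perm /= -addbA addbb addbF. Qed.

Lemma swap_E (p : bool * 'I_N) (e : 'I_N * bool) :
  swapop R p e = (e == (p.2, p.1))%:R.
Proof.
case: p => b j; case: e => k c; rewrite /swapop /= xpair_eqE.
by rewrite (eq_sym b) (eq_sym j) andbC.
Qed.

Lemma Uorc_E (e : 'I_N * bool) (q : bool * 'I_N) :
  Uorc R istar e q = (q == oracle_perm (e.2, e.1))%:R.
Proof.
case: e => k c; case: q => b j; rewrite /Uorc /oracle_perm /fsearch /= xpair_eqE.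
have [->|nkj] := eqVneq j k; last by rewrite andbF.
by rewrite andbT /=; case: b; case: c; case: (k == istar).
Qed.

Lemma query_E inv (p q : bool * 'I_N) :
  query R istar inv p q = (q == oracle_perm p)%:R.
Proof.
case: inv; rewrite /query /mulop /adjop.
  under eq_bigr => e _ do rewrite Uorc_E (swap_E q) !rmorph_nat.
  rewrite sum_kron_r' /=.
  case: p => b j; case: q => b' j'; rewrite /oracle_perm /= !xpair_eqE.
  have [->|njj] := eqVneq j' j; last by rewrite ?andbF ?andFb.
  by rewrite !andbT; case: b; case: b'; case: (j == istar).
under eq_bigr => e _ do rewrite swap_E Uorc_E.
by rewrite sum_kron_l' /=; case: p.
Qed.

Definition oracle_permW (W : finType) (s : (bool * 'I_N) * W) := (oracle_perm s.1, s.2).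

Lemma oracle_permW_inj (W : finType) : injective (@oracle_permW W).
Proof.
apply: (can_inj (g := @oracle_permW W)) => [[s1 s2]].
by rewrite /oracle_permW /= oracle_perm_invol.
Qed.

Lemma query_act (W : finType) inv (x : ((bool * 'I_N) * W) -> C) :
  opv (tensop (query R istar inv) (@idop R W)) x = fun s => x (oracle_permW s).
Proof.
apply: functional_extensionality => s; rewrite /opv /tensop.
rewrite -(sum_kron_l' (oracle_permW s) x); apply: eq_bigr => t _.
rewrite query_E /idop; congr (_ * _).
case: t => t1 t2; case: s => s1 s2; rewrite /oracle_permW /= xpair_eqE -natrM mulnb.
by rewrite (eq_sym s2).
Qed.

Lemma sqnorm_perm (W : finType) (x : ((bool * 'I_N) * W) -> C) :
  sqnorm (fun s => x (oracle_permW s)) = sqnorm x.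
Proof. by rewrite /sqnorm [in RHS](reindex_inj (@oracle_permW_inj W)). Qed.

Definition qmag (W : finType) (i : 'I_N) (x : ((bool * 'I_N) * W) -> C) : C :=
  \sum_s (s.1.2 == i)%:R * (x s * (x s)^*).

(* The oracle permutation fixes the query index, hence query magnitudes. *)
Lemma qmag_perm (W : finType) (x : ((bool * 'I_N) * W) -> C) :
  qmag istar (fun s => x (oracle_permW s)) = qmag istar x.
Proof.
rewrite /qmag [in RHS](reindex_inj (@oracle_permW_inj W)); apply: eq_bigr => s _.
by case: s => [[b j] w].
Qed.

(* A query can only move the part of the state that queries istar:
   |O x - x|^2 <= 4 qmag istar x. *)
Lemma query_disturbance (W : finType) (x : ((bool * 'I_N) * W) -> C) :
  sqnorm (vsub (fun s => x (oracle_permW s)) x) <= 4 * qmag istar x.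
Proof.
apply: (@le_trans _ _ (\sum_s (s.1.2 == istar)%:R *
    (2 * (x (oracle_permW s) * (x (oracle_permW s))^*) + 2 * (x s * (x s)^*)))).
  apply: ler_sum => s _; rewrite /vsub.
  case: s => [[b j] w] /=; have [->|nj] := eqVneq j istar.
    by rewrite mul1r; apply: sqr_sub_le.
  by rewrite mul0r /oracle_permW /oracle_perm /= (negbTE nj) addbF subrr mul0r.
rewrite (_ : \sum_s _ = 2 * qmag istar (fun s => x (oracle_permW s)) + 2 * qmag istar x).
  by rewrite qmag_perm le_eqVlt; apply/orP; left; apply/eqP; ring.
by rewrite /qmag !mulr_sumr -big_split /=; apply: eq_bigr => s _; ring.
Qed.

End Oracle.

Lemma sum_qmag (R : realType) (N : nat) (W : finType) (x : ((bool * 'I_N) * W) -> R[i]) :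
  \sum_(i : 'I_N) qmag i x = sqnorm x.
Proof.
rewrite exchange_big /=; apply: eq_bigr => s _.
exact: (sum_kron_l s.1.2 (fun _ => x s * (x s)^*)).
Qed.

Section Hybrid.
Variable R : realType.
Local Notation C := (R[i]).
Variable N : nat.
Variable Q : qalg R N.
Hypothesis hQ : qalg_valid Q.
Local Notation S := ((bool * 'I_N) * qW Q)%type.
Local Notation T := (qT Q).

(* State after k steps on input |1>_B, with the oracle marking i ... *)
Definition run (i : 'I_N) k : S -> C := fun s => qstate Q i k s true.
(* ... and with the identity in place of every query. *)
Fixpoint run0 k : S -> C :=
  match k with
  | 0 => fun s => qVin Q s true
  | k'.+1 => opv (qVmid Q k') (run0 k')
  end.

Lemma run_S i k : run i k.+1 = opv (qVmid Q k) (fun s => run i k (oracle_permW i s)).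
Proof. by rewrite -(query_act i (qinv Q k) (run i k)). Qed.

Lemma sqnorm_run0 k : (k <= T)%N -> sqnorm (run0 k) = 1.
Proof.
have [hin [hmid _]] := hQ.
elim: k => [_|k IH hk] /=.
  have := f_equal (fun X => X true true) hin; rewrite /mulop /adjop /idop /= => e.
  by rewrite /sqnorm -[RHS]e; apply: eq_bigr => s _; rewrite mulrC.
by have [hu _] := hmid k hk; rewrite sqnorm_isometry // IH // ltnW.
Qed.

Definition drift i k := sqnorm (vsub (run i k) (run0 k)).

(* Hybrid argument (Bennett-Bernstein-Brassard-Vazirani): the drift after k
   steps is at most k times the total disturbance 4 qmag of the queries. *)
Lemma drift_le i k : (k <= T)%N ->
  drift i k <= k%:R * \sum_(j < k) 4 * qmag i (run0 j).
Proof.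
have [_ [hmid _]] := hQ.
elim: k => [_|k IH hk]; first by rewrite /drift /vsub /sqnorm big1 ?mul0r // => s _;
  rewrite subrr mul0r.
have [hu _] := hmid k hk.
have IH' := IH (ltnW hk).
rewrite /drift run_S /= opv_sub sqnorm_isometry //.
set a : S -> C := fun s => vsub (run i k) (run0 k) (oracle_permW i s).
set b : S -> C := vsub (fun s => run0 k (oracle_permW i s)) (run0 k).
have eab : vsub (fun s => run i k (oracle_permW i s)) (run0 k) = fun s => a s + b s.
  by apply: functional_extensionality => s; rewrite /a /b /vsub; ring.
have na : sqnorm a = drift i k by rewrite /a sqnorm_perm.
have nb : sqnorm b <= 4 * qmag i (run0 k) by apply: query_disturbance.
rewrite eab big_ord_recr /=.
have [k0|kn0] := eqVneq k 0%N.
  subst k; rewrite big_ord0 add0r mul1r.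
  have a0 s : a s = 0 by rewrite /a /vsub /run /= subrr.
  by rewrite /sqnorm; under eq_bigr => s _ do rewrite a0 add0r.
set Sk := \sum_(j < k) _ in IH' *.
have kpos : 0 < k%:R :> C by rewrite ltr0n lt0n.
rewrite -(ler_pM2l kpos); apply: (le_trans (sqnorm_add_le a b (ltW kpos))).
have -> : k%:R * ((k.+1)%:R * (Sk + 4 * qmag i (run0 k))) =
    (k%:R + 1) * (k%:R * Sk) + k%:R * (k%:R + 1) * (4 * qmag i (run0 k)).
  by rewrite -addn1 natrD; ring.
by rewrite na; apply: lerD; apply: ler_wpM2l => //;
  rewrite ?mulr_ge0 ?addr_ge0 ?ler0n.
Qed.

(* Summed over all marked elements the query magnitudes of each run0 j add up
   to 1, so the total drift is at most 4 T^2. *)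
Lemma sum_drift_le : \sum_i drift i T <= T%:R * (T%:R * 4).
Proof.
apply: (le_trans (ler_sum _ (fun i _ => drift_le i (leqnn T)))).
rewrite -mulr_sumr exchange_big /= (_ : \sum_j _ = \sum_(j < T) (4 : C)).
  by rewrite sumr_const card_ord (mulrC _ 4) (mulr_natr 4 T).
apply: eq_bigr => j _; rewrite -mulr_sumr sum_qmag sqnorm_run0 ?mulr1 //.
exact: ltnW (ltn_ord j).
Qed.

Definition final i := opv (qVout Q) (run i T).
Definition final0 := opv (qVout Q) (run0 T).
Definition succ i := \sum_o final i (i, o) * (final i (i, o))^*.
Definition succ0 i := \sum_o final0 (i, o) * (final0 (i, o))^*.

Lemma succ_drift i : succ i - 2 * succ0 i <= 2 * drift i T.
Proof.
have [_ [_ hout]] := hQ.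
rewrite /drift -(sqnorm_isometry _ hout) -opv_sub -/(final i) -/final0.
rewrite /succ /succ0 mulr_sumr -sumrB.
apply: (@le_trans _ _ (2 * \sum_o vsub (final i) final0 (i, o) * (vsub (final i) final0 (i, o))^*)).
  by rewrite mulr_sumr; apply: ler_sum => o _; exact: sqr_sub_ge.
apply: ler_wpM2l => //; rewrite /sqnorm sum_pair (bigD1 i) //= lerDl.
by apply: sumr_ge0 => j _; apply: sumr_ge0 => o _; apply: mul_conjC_ge0.
Qed.

Lemma success_query_bound (p : C) : (forall i, p <= succ i) ->
  N%:R * p - 2 <= 2 * (T%:R * (T%:R * 4)).
Proof.
move=> hp.
have sum_succ0 : \sum_i succ0 i = 1.
  have [_ [_ hout]] := hQ.
  by rewrite -(sqnorm_run0 (leqnn T)) -(sqnorm_isometry (run0 T) hout) /sqnorm sum_pair.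
apply: (@le_trans _ _ (\sum_i (succ i - 2 * succ0 i))).
  rewrite sumrB -mulr_sumr sum_succ0 mulr1 lerD2r.
  have -> : N%:R * p = \sum_(i < N) p by rewrite sumr_const card_ord mulr_natl.
  exact: ler_sum.
apply: (le_trans (ler_sum _ (fun i _ => succ_drift i))).
by rewrite -mulr_sumr ler_wpM2l // sum_drift_le.
Qed.

End Hybrid.

(* A super-operator of diamond norm at most c moves every diagonal entry of
   the image of a basis projector by at most c: test the diamond norm on
   |t><t| (x) |tt><tt| with the trivial ancilla, and bound the entry by the
   trace norm. *)
Lemma diamond_le_entry (R : realType) (I J : finType) (Phi : supop R I J) (c : R)
    (t : I) (p : J) :
  0 <= c -> diamond_le Phi c -> `|Phi (basis_proj R t) p p| <= c%:C%C.
Proof.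
move=> c0 hd.
have slice : (fun i i' => basis_proj R (t, tt) (i, tt) (i', tt)) = basis_proj R t.
  apply: functional_extensionality => i; apply: functional_extensionality => i'.
  by rewrite /basis_proj !xpair_eqE !andbT.
have := tracenorm_entry (tensid Phi (basis_proj R (t, tt))) (p, tt).
have := hd unit (basis_proj R (t, tt)) (tracenorm_basis_proj R (t, tt)).
rewrite /tensid /= slice; set z := Phi _ p p; set tn := tracenorm _ => htn hz.
have tn0 : 0 <= tn := tracenorm_ge0 _.
have c0' : 0 <= c%:C%C by rewrite lecR.
rewrite -ler_sqr ?nnegrE // normCK mulrC expr2.
by apply: (le_trans hz); apply: le_trans (ler_wpM2l tn0 htn) (ler_wpM2r c0' htn).
Qed.

Section Success.
Variable R : realType.
Local Notation C := (R[i]).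
Variable N : nat.
Hypothesis hN : (2 <= N)%N.
Variable Q : qalg R N.
Hypothesis hQ : qalg_valid Q.

Lemma qchannel_marked istar :
  qchannel Q istar (basis_proj R true) istar istar = succ Q istar.
Proof.
rewrite /qchannel /ptr2 /succ; apply: eq_bigr => o _.
by rewrite /mulop big_bool /= !big_bool /basis_proj /= !mulr0n !mulr1n !mul0r
  ?addr0 ?mul1r ?mulr0 ?addr0.
Qed.

(* An approximation of the Petz map within diamond distance c finds the
   marked element with probability at least 1 - c, because the exact Petz map
   does so with certainty. *)
Lemma success_ge (c : R) istar : 0 <= c ->
  diamond_le (supop_sub (qchannel Q istar) (petzN istar)) c ->
  (1 - c)%:C%C <= succ Q istar.
Proof.
move=> c0 hd; have := diamond_le_entry true istar c0 hd.
rewrite /supop_sub qchannel_marked petz_marked //.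
have succ_real : succ Q istar - 1 \is Num.real.
  by rewrite rpredB ?real1 // ger0_real // sumr_ge0 // => o _; apply: mul_conjC_ge0.
move=> /(real_lerNnormlW succ_real).
by rewrite rmorphB rmorph1 lerBrDl addrC -lerBrDl.
Qed.

Lemma query_lower_bound (c : R) : 0 <= c ->
  (forall istar, diamond_le (supop_sub (qchannel Q istar) (petzN istar)) c) ->
  N%:R * (1 - c) - 2 <= 2 * ((qT Q)%:R * ((qT Q)%:R * 4)).
Proof.
move=> c0 hd; rewrite -lecR.
have := success_query_bound hQ (fun i => success_ge c0 (hd i)).
by rewrite !(rmorphB, rmorphM, rmorph_nat).
Qed.

End Success.

Lemma sqrt_query_bound (R : realType) (a n t : R) : 0 < a -> 0 <= n -> 0 <= t ->
  4 < n * a -> n * a - 2 <= 2 * (t * (t * 4)) -> Num.sqrt a / 4 * Num.sqrt n <= t.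
Proof.
move=> a0 n0 t0 big hb.
rewrite -ler_sqr ?nnegrE ?mulr_ge0 ?divr_ge0 ?sqrtr_ge0 ?invr_ge0 //.
by rewrite !exprMn !sqr_sqrtr ?ltW //; nra.
Qed.

Unset Implicit Arguments.
Set Strict Implicit.

Theorem mainTheorem5 (R : realType) (c : R) :
  0 <= c -> c < 1 ->
  exists (K : R) (N0 : nat), 0 < K /\
    forall (N : nat), (2 <= N)%N -> (N0 <= N)%N ->
    forall Q : qalg R N, qalg_valid Q ->
      (forall istar : 'I_N,
         diamond_le (supop_sub (qchannel Q istar) (petzN istar)) c) ->
      K * Num.sqrt (N%:R : R) <= (qT Q)%:R.
Proof.
move=> c0 c1; have a0 : 0 < 1 - c by rewrite subr_gt0.
exists (Num.sqrt (1 - c) / 4), (Num.bound (4 / (1 - c))).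
split; first by rewrite divr_gt0 // sqrtr_gt0.
move=> N hN hN0 Q hQ hd.
apply: sqrt_query_bound (query_lower_bound hN hQ c0 hd) => //; rewrite ?ler0n //.
rewrite -ltr_pdivrMr //; apply: (lt_le_trans (archi_boundP _)).
  by rewrite divr_ge0 // ltW.
by rewrite ler_nat.
Qed.
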